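(* Let $d>d'\ge1$ and $\varepsilon,\varepsilon',p>0$. Then the measure $m_p$ on $E=\mathbb{R}^d_\varepsilon\cup\mathbb{R}^{d'}_{\varepsilon'}\cup\{a^*\}$ does not have the volume doubling property with respect to $\rho$: there is no constant $C>0$ such that $m_p(B(x;2r))\le C\,m_p(B(x;r))$ for all $x\in E$ and all $r>0$, where $B(x;r)=\{y\in E:\rho(x,y)<r\}$.
   Context: For $k\ge2$, $\mathbb{R}^k_r=\{x\in\mathbb{R}^k:|x|>r\}$; $\mathbb{R}^1_r=(0,\infty)$. The space $E$ is obtained by placing $\mathbb{R}^d$ and $\mathbb{R}^{d'}$ along complementary coordinates of $\mathbb{R}^{d+d'}$ and identifying $\{x\in\mathbb{R}^d:|x|\le\varepsilon\}$ and $\{x\in\mathbb{R}^{d'}:|x|\le\varepsilon'\}$ (the point $0$ if $d'=1$) with a single point $a^*$. $m_p(A)=m^{(d)}(A\cap\mathbb{R}^d)+p\,m^{(d')}(A\cap\mathbb{R}^{d'})$ with Lebesgue measures $m^{(k)}$. $|x|_\rho=|x|-\varepsilon$ on $\mathbb{R}^d_\varepsilon$, $|x|_\rho=|x|-\varepsilon'$ on $\mathbb{R}^{d'}_{\varepsilon'}$ ($|x|_\rho=|x|$ on $(0,\infty)$ if $d'=1$), $|a^*|_\rho=0$; $\rho(x,y)=(|x|_\rho+|y|_\rho)\wedge|x-y|$ with $|x-y|:=\infty$ if one point lies in $\mathbb{R}^d_\varepsilon\cup\{a^*\}$ and the other in $\mathbb{R}^{d'}_{\varepsilon'}\cup\{a^*\}$.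 *)

From HB Require Import structures.
From mathcomp Require Import all_boot all_order all_algebra.
From mathcomp Require Import all_classical all_reals all_analysis.
Set Implicit Arguments. Unset Strict Implicit. Unset Printing Implicit Defensive.
Import Order.TTheory GRing.Theory Num.Theory.
Local Open Scope classical_set_scope.
Local Open Scope ring_scope.

Section Defs.
Variable R : realType.

Definition enorm (n : nat) (x : 'rV[R]_n) : R := Num.sqrt (\sum_(i < n) x 0 i ^+ 2).

Definition box (n : nat) (a b : 'rV[R]_n) : set 'rV[R]_n :=
  [set x | forall i : 'I_n, a 0 i <= x 0 i < b 0 i].
Definition box_vol (n : nat) (a b : 'rV[R]_n) : \bar R :=
  (\prod_(i < n) Num.max 0 (b 0 i - a 0 i))%:E.

(* n-dimensional Lebesgue (outer) measure: infimum of the total volume of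
   countable covers by boxes. On Borel sets this is the Lebesgue measure m^(n). *)
Definition leb (n : nat) (A : set 'rV[R]_n) : \bar R :=
  ereal_inf [set s : \bar R | exists (a b : nat -> 'rV[R]_n),
     A `<=` \bigcup_k box (a k) (b k) /\
     s = (\sum_(0 <= k <oo) box_vol (a k) (b k))%E].

(* The space E: a^* (Astar), points of R^d (Big) and of R^{d'} (Small).
   Not every vector is a point of E: see [Evalid]. *)
Inductive Espace (d d' : nat) : Type :=
  | Astar : Espace d d'
  | Big : 'rV[R]_d -> Espace d d'
  | Small : 'rV[R]_d' -> Espace d d'.
Arguments Astar {d d'}.
Arguments Big {d d'} _.
Arguments Small {d d'} _.

Section E.
Variables (d d' : nat) (eps eps' p : R).

(* R^{d'}_{eps'} = {|y| > eps'} if d' >= 2, and (0, oo) if d' = 1 *)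
Definition small_valid (y : 'rV[R]_d') : Prop :=
  if d' == 1%N then forall i : 'I_d', 0 < y 0 i else eps' < enorm y.

Definition Evalid (x : Espace d d') : Prop :=
  match x with
  | Astar => True
  | Big v => eps < enorm v
  | Small w => small_valid w
  end.

Definition rnorm (x : Espace d d') : R :=
  match x with
  | Astar => 0
  | Big v => enorm v - eps
  | Small w => if d' == 1%N then enorm w else enorm w - eps'
  end.

(* rho(x,y) = (|x|_rho + |y|_rho) /\ |x - y|, with |x - y| = oo unless both
   points lie in the same punctured component *)
Definition rho (x y : Espace d d') : R :=
  match x, y with
  | Big v, Big w => Num.min (rnorm x + rnorm y) (enorm (v - w))
  | Small v, Small w => Num.min (rnorm x + rnorm y) (enorm (v - w))
  | _, _ => rnorm x + rnorm y
  end.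

Definition ball_rho (x : Espace d d') (r : R) : set (Espace d d') :=
  [set y | Evalid y /\ rho x y < r].

Definition m_p (A : set (Espace d d')) : \bar R :=
  (leb [set v | A (Big v)] + p%:E * leb [set w | A (Small w)])%E.
End E.
End Defs.

(* Put x on the thin component R^{d'} with |x|_rho = T.  The ball B(x, T) misses
   R^d and lies in a cube of side 2T of R^{d'}, so m_p(B(x, T)) <= p (2T)^{d'};
   the ball B(x, 2T) contains every point y of R^d with |y|_rho < T, hence a cube
   of R^d whose side is proportional to T, so m_p(B(x, 2T)) >= c T^d.  Since
   d > d', the ratio is unbounded as T grows.  Lower bounds for the outer measure
   [leb] come from the fact that a box has volume at most the total volume of any
   countable cover by boxes, proved by induction on the dimension by integrating
   over the first coordinate the covers of the slices. *)

From mathcomp Require Import all_boot all_order all_algebra.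
From mathcomp Require Import all_classical all_reals all_analysis.
From mathcomp Require Import measurable_realfun ring lra.
Import Order.TTheory GRing.Theory Num.Theory.
Local Open Scope classical_set_scope.
Local Open Scope ring_scope.
Set Implicit Arguments. Unset Strict Implicit.

Section LebesgueOuterMeasure.
Variable R : realType.

Lemma lebesgue_measure_itv_co (a b : R) :
  lebesgue_measure `[a, b[%classic = (Num.max 0 (b - a))%:E.
Proof.
rewrite lebesgue_measure_itv /= lte_fin; case: ltP => ab.
  by rewrite -EFinB; congr (_%:E); apply/esym/max_idPr; rewrite subr_ge0 ltW.
by congr (_%:E); apply/esym/max_idPl; rewrite subr_le0.
Qed.

Lemma itv_cover_le_series (P : pred nat) (lo hi V : nat -> R) (A B : R) (c : \bar R) :
  (forall k, 0 <= V k) -> (0 <= c)%E ->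
  (forall t, A <= t < B ->
     (c <= \sum_(0 <= k <oo | P k && (lo k <= t < hi k)%R) (V k)%:E)%E) ->
  ((Num.max 0 (B - A))%:E * c <=
     \sum_(0 <= k <oo | P k) ((Num.max 0 (hi k - lo k))%:E * (V k)%:E))%E.
Proof.
move=> V0 c0 cover.
have [BA|AB] := leP B A.
  rewrite (_ : Num.max 0 (B - A) = 0) ?mul0e; last by apply/max_idPl; rewrite subr_le0.
  by apply: nneseries_ge0 => k _ _; rewrite -EFinM lee_fin mulr_ge0 ?le_max ?lexx.
pose I k := `[lo k, hi k[%classic.
pose f k t : \bar R := ((P k)%:R * V k * \1_(I k) t)%:E.
have f0 k t : (0 <= f k t)%E by rewrite lee_fin !mulr_ge0 // indicE.
have mf k : measurable_fun setT (f k).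
  apply/measurable_EFinP; apply: measurable_funM => //.
  by apply: measurable_indic; exact: measurable_itv.
have memI k t : (t \in I k) = (lo k <= t < hi k).
  by rewrite mem_setE in_itv.
have cover_f t : A <= t < B -> (c <= \sum_(0 <= k <oo) f k t)%E.
  move=> /cover; congr (_ <= _)%E; rewrite eseries_mkcond; apply: eq_eseriesr => k _.
  rewrite /f indicE memI.
  case: (P k) => /=; last by rewrite !mul0r.
  by case: (_ && _); rewrite mul1r ?mulr1 ?mulr0.
have int_f k : (\int[lebesgue_measure]_(t in setT) f k t =
    ((P k)%:R * V k)%:E * (Num.max 0 (hi k - lo k))%:E)%E.
  rewrite /f; under eq_integral do rewrite EFinM.
  rewrite ge0_integralZl //; last 2 first.
  - by apply/measurable_EFinP; apply: measurable_indic; exact: measurable_itv.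
  - by rewrite lee_fin mulr_ge0.
  rewrite integral_indic //; last exact: measurable_itv.
  rewrite -[X in (_ * X)%E]/(lebesgue_measure (I k `&` [set: R])) setIT.
  by rewrite lebesgue_measure_itv_co.
have mD : measurable `[A, B[%classic by exact: measurable_itv.
rewrite -lebesgue_measure_itv_co.
rewrite muleC -integral_cst //.
have mS : measurable_fun setT (fun t => \sum_(0 <= k <oo) f k t)%E.
  exact: ge0_emeasurable_sum.
apply: (@le_trans _ _ (\int[lebesgue_measure]_(t in `[A, B[) \sum_(0 <= k <oo) f k t)%E).
  by apply: ge0_le_integral => //; exact: measurable_funS mS.
apply: (@le_trans _ _ (\int[lebesgue_measure]_(t in setT) \sum_(0 <= k <oo) f k t)%E).
  by apply: ge0_subset_integral => // t _; exact: nneseries_ge0.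
rewrite integral_nneseries // [X in (_ <= X)%E]eseries_mkcond.
apply: lee_nneseries => k _ => [_|]; first exact: integral_ge0.
by rewrite int_f; case: (P k); rewrite /= ?mul1r ?mul0r ?mul0e // muleC.
Qed.

Definition row_tail n (v : 'rV[R]_n.+1) : 'rV[R]_n := \row_i v 0 (lift ord0 i).

Definition row_cons n (t : R) (y : 'rV[R]_n) : 'rV[R]_n.+1 :=
  \row_j (if unlift ord0 j is Some i then y 0 i else t).

Lemma box_vol_ge0 n (a b : 'rV[R]_n) : (0 <= box_vol a b)%E.
Proof. by rewrite lee_fin; apply: prodr_ge0 => i _; rewrite le_max lexx. Qed.

Lemma box_vol_recl n (a b : 'rV[R]_n.+1) : box_vol a b =
  ((Num.max 0 (b 0 ord0 - a 0 ord0))%:E * box_vol (row_tail a) (row_tail b))%E.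
Proof.
rewrite /box_vol big_ord_recl EFinM; congr (_ * _%:E)%E.
by apply: eq_bigr => i _; rewrite !mxE.
Qed.

Lemma box_vol_cube n (a b : 'rV[R]_n) (s : R) : 0 <= s ->
  (forall i, b 0 i - a 0 i = s) -> box_vol a b = (s ^+ n)%:E.
Proof.
move=> s0 ab; rewrite /box_vol (eq_bigr (fun=> s)) ?prodr_const ?card_ord //.
by move=> i _; rewrite ab; apply/max_idPr.
Qed.

Lemma box_cover_slice n (P : pred nat) (A B : 'rV[R]_n.+1) (a b : nat -> 'rV[R]_n.+1) t :
  box A B `<=` \bigcup_(k in [set k | P k]) box (a k) (b k) ->
  A 0 ord0 <= t < B 0 ord0 ->
  box (row_tail A) (row_tail B) `<=`
    \bigcup_(k in [set k | P k && (a k 0 ord0 <= t < b k 0 ord0)])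
      box (row_tail (a k)) (row_tail (b k)).
Proof.
move=> cover tAB y y_box.
have [k Pk k_box] : (\bigcup_(k in [set k | P k]) box (a k) (b k)) (row_cons t y).
  apply: cover => i; rewrite mxE; case: unliftP => [j ->|->] //.
  by have := y_box j; rewrite !mxE.
exists k; first by rewrite /= Pk /=; have := k_box ord0; rewrite mxE unlift_none.
by move=> j; have := k_box (lift ord0 j); rewrite !mxE liftK.
Qed.

Lemma box_vol_le_cover n (P : pred nat) (A B : 'rV[R]_n) (a b : nat -> 'rV[R]_n) :
  box A B `<=` \bigcup_(k in [set k | P k]) box (a k) (b k) ->
  (box_vol A B <= \sum_(0 <= k <oo | P k) box_vol (a k) (b k))%E.
Proof.
elim: n P A B a b => [|n IH] P A B a b cover.
  have [k Pk _] : (\bigcup_(k in [set k | P k]) box (a k) (b k)) 0.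
    by apply: cover => -[].
  rewrite (nneseriesD1 _ Pk) => [|j _]; last exact: box_vol_ge0.
  rewrite /box_vol !big_ord0 leeDl //.
  by apply: nneseries_ge0 => j _ _; exact: box_vol_ge0.
rewrite box_vol_recl; under eq_eseriesr do rewrite box_vol_recl.
apply: itv_cover_le_series.
- by move=> k; apply: prodr_ge0 => i _; rewrite le_max lexx.
- exact: box_vol_ge0.
- by move=> t tAB; apply: IH; exact: box_cover_slice.
Qed.

Lemma leb_ge0 n (A : set 'rV[R]_n) : (0 <= leb A)%E.
Proof.
apply/ereal_infP => s [a [b [_ ->]]].
by apply: nneseries_ge0 => k _ _; exact: box_vol_ge0.
Qed.

Lemma box_vol_le_leb n (A : set 'rV[R]_n) (a b : 'rV[R]_n) :
  box a b `<=` A -> (box_vol a b <= leb A)%E.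
Proof.
move=> sub; apply/ereal_infP => s [ak [bk [cover ->]]].
by apply: (@box_vol_le_cover n xpredT) => x /sub /cover [k _ Hk]; exists k.
Qed.

(* For [n = 0] every box has volume [1], so [leb set0 = +oo]. *)
Lemma leb_le_box_vol n (A : set 'rV[R]_n) (a b : 'rV[R]_n) : (0 < n)%N ->
  A `<=` box a b -> (leb A <= box_vol a b)%E.
Proof.
case: n A a b => // n A a b _ sub; apply: ge_ereal_inf.
exists (box_vol a b) => //.
exists (fun k => if k == 0%N then a else 0), (fun k => if k == 0%N then b else 0).
split; first by move=> x /sub Hx; exists 0%N.
rewrite (nneseriesD1 _ (n:=0%N)) // => [|k _]; last exact: box_vol_ge0.
rewrite eseries0 ?adde0 // => k _ /negbTE /= ->.
by rewrite box_vol_recl !mxE subrr maxxx mul0e.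
Qed.

Lemma leb_set0 n : (0 < n)%N -> leb (set0 : set 'rV[R]_n) = 0%E.
Proof.
move=> n_gt0; apply/le_anti; rewrite leb_ge0 andbT.
rewrite (le_trans (leb_le_box_vol (a := 0) (b := 0) n_gt0 (sub0set _))) //.
by rewrite (box_vol_cube (s := 0)) ?expr0n ?gtn_eqF // => i; rewrite subrr.
Qed.

End LebesgueOuterMeasure.

Section EuclideanNorm.
Variable R : realType.

Lemma enorm_ge0 n (v : 'rV[R]_n) : 0 <= enorm v.
Proof. exact: sqrtr_ge0. Qed.

Lemma coord_le_enorm n (v : 'rV[R]_n) i : `|v 0 i| <= enorm v.
Proof.
rewrite /enorm -sqrtr_sqr; apply: ler_wsqrtr.
by rewrite (bigD1 i) //= lerDl; apply: sumr_ge0 => j _; exact: sqr_ge0.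
Qed.

Lemma enorm_le n (v : 'rV[R]_n) (M : R) : 0 <= M -> (forall i, `|v 0 i| <= M) ->
  enorm v <= n%:R * M.
Proof.
move=> M0 vM; rewrite /enorm -(@ger0_norm _ (n%:R * M)) ?mulr_ge0 //.
rewrite -sqrtr_sqr; apply: ler_wsqrtr.
apply: (@le_trans _ _ (\sum_(i < n) M ^+ 2)).
  by apply: ler_sum => i _; rewrite -real_normK ?num_real // lerXn2r ?nnegrE.
rewrite sumr_const card_ord exprMn -[M ^+ 2 *+ n]mulr_natl.
apply: ler_wpM2r; first exact: sqr_ge0.
by case: n {v vM} => [|k]; rewrite -natrX ler_nat // expnS expn1 leq_pmull.
Qed.

Lemma enorm_delta n (c : R) (i : 'I_n) : enorm (c *: delta_mx 0 i) = `|c|.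
Proof.
rewrite /enorm (bigD1 i) //= big1 => [|j /negbTE ji]; last first.
  by rewrite !mxE ji mulr0 expr0n.
by rewrite !mxE !eqxx mulr1 addr0 sqrtr_sqr.
Qed.

End EuclideanNorm.

Lemma mul_expr_lt_expr (R : realDomainType) (S K : R) (m n : nat) :
  1 <= S -> K < S -> (m < n)%N -> S ^+ m * K < S ^+ n.
Proof.
move=> S1 KS mn; have S0 : 0 < S by exact: lt_le_trans S1.
rewrite -(subnKC (ltnW mn)) exprD ltr_pM2l ?exprn_gt0 //.
apply: (lt_le_trans KS); move: mn; rewrite -subn_gt0; case: (n - m)%N => // k _.
by rewrite exprS ler_peMr ?exprn_ege1 // ltW.
Qed.

Section TwoComponentSpace.
Variables (R : realType) (d d' : nat) (eps eps' p : R).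
Hypotheses (d_gt0 : (0 < d)%N) (d'_gt0 : (0 < d')%N).
Hypotheses (eps_gt0 : 0 < eps) (eps'_gt0 : 0 < eps') (p_ge0 : 0 <= p).

Let Big := @Big R d d'.
Let Small := @Small R d d'.
Let rnorm := rnorm eps eps' (d := d) (d' := d').
Let ball := ball_rho eps eps' (d := d) (d' := d').

Lemma rnorm_Small_ge0 w : small_valid eps' w -> 0 <= rnorm (Small w).
Proof.
rewrite /small_valid /rnorm /=; case: eqP => _; first by move=> _; exact: enorm_ge0.
by rewrite subr_ge0 => /ltW.
Qed.

Lemma exists_Small_rnorm (T : R) : 0 < T ->
  exists w, small_valid eps' w /\ rnorm (Small w) = T.
Proof.
move=> T0; pose c := if d' == 1%N then T else T + eps'.
have c0 : 0 < c by rewrite /c; case: eqP => _ //; exact: addr_gt0.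
exists (c *: delta_mx 0 (Ordinal d'_gt0)); rewrite /small_valid /rnorm /= enorm_delta.
rewrite gtr0_norm // /c; case: eqP => [d'1|_]; last by rewrite addrK ltrDr.
split=> // i; rewrite !mxE (_ : i == Ordinal d'_gt0) ?mulr1 //.
by apply/eqP/val_inj => /=; move: (ltn_ord i); rewrite {2}d'1; case: (val i).
Qed.

Lemma ball_Small_no_Big w v r : r <= rnorm (Small w) -> Evalid eps eps' (Big v) ->
  ~ ball (Small w) r (Big v).
Proof.
move=> rw /= vv [_]; rewrite -[X in X + _ < _]/(rnorm (Small w)).
by apply/negP; rewrite -leNgt (le_trans rw) // lerDl subr_ge0 ltW.
Qed.

Lemma ball_Small_sub_box w r : r <= rnorm (Small w) ->
  [set y | ball (Small w) r (Small y)] `<=` box (w - const_mx r) (w + const_mx r).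
Proof.
move=> rw y [yv]; rewrite /rho gt_min.
rewrite -[X in X + _]/(rnorm (Small w)) -[X in _ + X]/(rnorm (Small y)).
rewrite ltNge (le_trans rw) ?lerDl ?rnorm_Small_ge0 //= => wy i.
have := le_lt_trans (coord_le_enorm (w - y) i) wy.
by rewrite !mxE ltr_norml => /andP[? ?]; apply/andP; split; lra.
Qed.

Lemma cube_sub_ball_Big w r (a s : R) : eps < a ->
  d%:R * (a + s) < eps + r - rnorm (Small w) ->
  box (const_mx a) (const_mx (a + s)) `<=` [set v | ball (Small w) r (Big v)].
Proof.
move=> eps_a far v v_box.
have v_bnd i : a <= v 0 i < a + s by have := v_box i; rewrite !mxE.
have a0 : 0 <= a by exact/ltW/(lt_trans eps_gt0).
have v_big : eps < enorm v.
  have /andP[av _] := v_bnd (Ordinal d_gt0).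
  by rewrite (lt_le_trans eps_a) // (le_trans av) // (le_trans (ler_norm _)) ?coord_le_enorm.
split=> //=; rewrite -[X in X + _ < _]/(rnorm (Small w)).
have : enorm v <= d%:R * (a + s).
  apply: enorm_le => [|i]; last by have /andP[? ?] := v_bnd i; rewrite ger0_norm; lra.
  by have /andP[? ?] := v_bnd (Ordinal d_gt0); lra.
lra.
Qed.

Lemma m_p_ball_Small_le w r : 0 <= r -> r <= rnorm (Small w) ->
  (m_p p (ball (Small w) r) <= (p * (2 * r) ^+ d')%:E)%E.
Proof.
move=> r0 rw; rewrite /m_p -[X in (_ <= X)%E]add0e EFinM.
have -> : [set v | ball (Small w) r (Big v)] = set0.
  by apply/seteqP; split=> // v [vv bv]; exact: (ball_Small_no_Big rw vv).
rewrite leb_set0 //; apply: leeD => //; apply: lee_wpmul2l; rewrite ?lee_fin //.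
apply: (le_trans (leb_le_box_vol d'_gt0 (ball_Small_sub_box rw))).
by rewrite (box_vol_cube (s := 2 * r)) ?mulr_ge0 // => i; rewrite !mxE; lra.
Qed.

Lemma m_p_ball_Small_ge w r (a s : R) : eps < a -> 0 <= s ->
  d%:R * (a + s) < eps + r - rnorm (Small w) ->
  ((s ^+ d)%:E <= m_p p (ball (Small w) r))%E.
Proof.
move=> eps_a s0 far; rewrite /m_p.
apply: (le_trans _ (leeDl _ _)); last by rewrite mule_ge0 ?lee_fin ?leb_ge0.
rewrite -(box_vol_cube (a := const_mx a) (b := const_mx (a + s))) // => [|i].
  exact/box_vol_le_leb/cube_sub_ball_Big.
by rewrite !mxE addrAC subrr add0r.
Qed.

End TwoComponentSpace.

Theorem proposition2p3 (R : realType) (d d' : nat) (eps eps' p : R) :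
  (1 <= d')%N -> (d' < d)%N -> 0 < eps -> 0 < eps' -> 0 < p ->
  ~ (exists C : R, 0 < C /\
       forall (x : Espace R d d'), Evalid eps eps' x ->
       forall r : R, 0 < r ->
         (m_p p (ball_rho eps eps' x (2 * r))
            <= C%:E * m_p p (ball_rho eps eps' x r))%E).
Proof.
move=> d'_gt0 d'_lt_d eps_gt0 eps'_gt0 p_gt0 [C [C_gt0 doubling]].
have d_gt0 : (0 < d)%N := ltn_trans d'_gt0 d'_lt_d.
have d_ge1 : 1 <= d%:R :> R by rewrite ler1n.
(* [K] makes [C p (2T)^{d'} = K S^{d'}], so [S > K] contradicts [S^d <= K S^{d'}]. *)
pose K := C * p * (4 * d%:R) ^+ d'.
have K_ge0 : 0 <= K by rewrite !mulr_ge0 ?exprn_ge0 ?ltW //; lra.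
pose S := K + eps + 2.
have S_gt : eps + 1 < S by rewrite /S; lra.
have K_lt_S : K < S by rewrite /S; lra.
pose T := 2 * d%:R * S.
have T_gt0 : 0 < T by rewrite !mulr_gt0 //; lra.
have [w [wv rw]] := exists_Small_rnorm d eps d'_gt0 eps'_gt0 T_gt0.
pose x := @Small R d d' w.
have small_ball : (m_p p (ball_rho eps eps' x T) <= (p * (2 * T) ^+ d')%:E)%E.
  by apply: (m_p_ball_Small_le d_gt0 d'_gt0 (ltW p_gt0) (ltW T_gt0)); rewrite rw.
have big_ball : ((S ^+ d)%:E <= m_p p (ball_rho eps eps' x (2 * T)))%E.
  apply: (m_p_ball_Small_ge d_gt0 eps_gt0 (ltW p_gt0) (a := eps + 1)).
  - by rewrite ltrDl.
  - lra.
  have : d%:R * (eps + 1) < d%:R * S by rewrite ltr_pM2l //; lra.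
  by rewrite rw /T; lra.
have C_ge0 : (0 <= C%:E)%E by rewrite lee_fin ltW.
have := le_trans big_ball (le_trans (doubling x wv _ T_gt0) (lee_wpmul2l C_ge0 small_ball)).
rewrite -EFinM lee_fin (_ : C * _ = S ^+ d' * K); last first.
  by rewrite /K /T mulrA (_ : 2 * (2 * d%:R * S) = 4 * d%:R * S) ?exprMn; ring.
by apply/negP; rewrite -ltNge mul_expr_lt_expr //; lra.
Qed.
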